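(* Let $\bm M=\bm M^\star+\bm E\in\mathbb R^{n_1\times n_2}$, with SVDs $\bm M^\star=\sum_{i=1}^{n_1}\sigma_i^\star\bm u_i^\star\bm v_i^{\star\top}$ and $\bm M=\sum_{i=1}^{n_1}\sigma_i\bm u_i\bm v_i^\top$, where $\sigma_1^\star\ge\dots\ge\sigma_{n_1}^\star\ge0$ and $\sigma_1\ge\dots\ge\sigma_{n_1}\ge0$ are the singular values, $\bm u_i^\star,\bm u_i$ the corresponding left singular vectors and $\bm v_i^\star,\bm v_i$ the corresponding right singular vectors. Let $\bm U^\star=[\bm u_1^\star,\dots,\bm u_r^\star]$ and $\bm U=[\bm u_1,\dots,\bm u_r]$ be the rank-$r$ leading left singular subspaces of $\bm M^\star$ and $\bm M$. If $\sigma_r^\star-\sigma_{r+1}^\star>2\|\bm E\|$, then $$\big\|(\bm U\bm U^\top-\bm U^\star\bm U^{\star\top})\bm M^\star\big\|\le\frac{4\sigma_r^\star\|\bm E\|}{\sigma_r^\star-\sigma_{r+1}^\star}.$$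
   Context: $\|\cdot\|$ denotes the spectral norm. *)

From HB Require Import structures.
From mathcomp Require Import all_boot all_order all_algebra.
From mathcomp Require Import classical_sets reals.
Set Implicit Arguments. Unset Strict Implicit. Unset Printing Implicit Defensive.
Import Order.TTheory GRing.Theory Num.Theory.
Local Open Scope ring_scope.
Local Open Scope classical_set_scope.

Definition vnorm {R : realType} {n : nat} (x : 'cV[R]_n) : R :=
  Num.sqrt (\sum_(i < n) x i 0 ^+ 2).

Definition specnorm {R : realType} {m n : nat} (A : 'M[R]_(m, n)) : R :=
  sup [set vnorm (A *m x) | x in [set x : 'cV[R]_n | vnorm x = 1]].

Definition diag_of {R : realType} (n : nat) (s : nat -> R) : 'M[R]_n :=
  diag_mx (\row_(i < n) s (nat_of_ord i)).

Definition lead_proj {R : realType} {n k : nat} (r : nat) (U : 'M[R]_(n, k)) : 'M[R]_n :=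
  \sum_(j < k | (nat_of_ord j < r)%N) (col j U *m (col j U)^T).

Definition is_svd {R : realType} {n1 n2 : nat} (M : 'M[R]_(n1, n2))
  (U : 'M[R]_n1) (s : nat -> R) (V : 'M[R]_(n2, n1)) : Prop :=
  [/\ U^T *m U = 1%:M, V^T *m V = 1%:M,
      (forall i, (i < n1)%N -> 0 <= s i),
      (forall i j, (i <= j)%N -> (j < n1)%N -> s j <= s i)
    & M = U *m diag_of n1 s *m V^T].

From HB Require Import structures.
From mathcomp Require Import all_boot all_order all_algebra.
From mathcomp Require Import classical_sets reals.
From mathcomp Require Import ring lra zify.
Import Order.TTheory GRing.Theory Num.Theory.
Local Open Scope ring_scope.

Set Implicit Arguments. Unset Strict Implicit. Unset Printing Implicit Defensive.

(* With P, P* the projectors onto the leading r left singular vectors of M = M* + E and M*,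
   and Q = 1 - P, Q* = 1 - P*, one has (P - P* ) M* = P Q* M* - Q P* M*.  Wedin's sin-theta
   theorem bounds |Q* P| and |Q_V P*_V| (right singular vectors) by |E| over a singular value
   gap, which Weyl's inequality keeps above (sigma*_r - sigma*_{r+1}) / 2.  Then
   |P Q* M*| <= |Q* P| sigma*_{r+1}, and Q P* M* = M Q_V P*_V - Q E P*_V gives
   |Q P* M*| <= sigma_{r+1} |Q_V P*_V| + |E|. *)

Section EuclideanNorm.
Variable R : realType.
Implicit Types (a c : R) (m n : nat).

Definition dot n (x y : 'cV[R]_n) : R := \sum_(i < n) x i 0 * y i 0.

Lemma dotC n (x y : 'cV[R]_n) : dot x y = dot y x.
Proof. by apply: eq_bigr => i _; rewrite mulrC. Qed.

Lemma dotDl n (x y z : 'cV[R]_n) : dot (x + y) z = dot x z + dot y z.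
Proof. by rewrite /dot -big_split; apply: eq_bigr => i _; rewrite mxE mulrDl. Qed.

Lemma dotZl n a (x z : 'cV[R]_n) : dot (a *: x) z = a * dot x z.
Proof. by rewrite /dot mulr_sumr; apply: eq_bigr => i _; rewrite mxE mulrA. Qed.

Lemma dotNl n (x z : 'cV[R]_n) : dot (- x) z = - dot x z.
Proof. by rewrite -scaleN1r dotZl mulN1r. Qed.

Lemma dotBl n (x y z : 'cV[R]_n) : dot (x - y) z = dot x z - dot y z.
Proof. by rewrite dotDl dotNl. Qed.

Lemma dotDr n (x y z : 'cV[R]_n) : dot z (x + y) = dot z x + dot z y.
Proof. by rewrite !(dotC z) dotDl. Qed.

Lemma dotZr n a (x z : 'cV[R]_n) : dot z (a *: x) = a * dot z x.
Proof. by rewrite !(dotC z) dotZl. Qed.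

Lemma dotBr n (x y z : 'cV[R]_n) : dot z (x - y) = dot z x - dot z y.
Proof. by rewrite !(dotC z) dotBl. Qed.

Lemma dot_mulmx m n (A : 'M[R]_(m, n)) x y : dot (A *m x) y = dot x (A^T *m y).
Proof.
have dotE k (u v : 'cV[R]_k) : dot u v = (u^T *m v) 0 0.
  by rewrite mxE; apply: eq_bigr => i _; rewrite mxE.
by rewrite !dotE trmx_mul mulmxA.
Qed.

Lemma dot_ge0 n (x : 'cV[R]_n) : 0 <= dot x x.
Proof. by apply: sumr_ge0 => i _; rewrite -expr2 sqr_ge0. Qed.

Lemma dot_eq0 n (x : 'cV[R]_n) : (dot x x == 0) = (x == 0).
Proof.
apply/idP/eqP => [|->]; last by rewrite /dot big1 // => i _; rewrite mxE mul0r.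
rewrite psumr_eq0 => [/allP x0|i _]; last by rewrite -expr2 sqr_ge0.
apply/matrixP => i j; rewrite (ord1 j) mxE.
by move: (x0 i (mem_index_enum i)); rewrite mulf_eq0 orbb => /eqP.
Qed.

Lemma cauchy_schwarz n (x y : 'cV[R]_n) : dot x y ^+ 2 <= dot x x * dot y y.
Proof.
have [->|y0] := eqVneq y 0.
  have -> : dot x 0 = 0 by rewrite /dot big1 // => i _; rewrite mxE mulr0.
  by rewrite expr0n /= mulr_ge0 ?dot_ge0.
have yy_gt0 : 0 < dot y y by rewrite lt_def dot_eq0 y0 dot_ge0.
have := dot_ge0 (dot y y *: x - dot x y *: y).
rewrite !dotBl !dotBr !dotZl !dotZr (dotC y x) => expand_ge0.
have : 0 <= dot y y * (dot x x * dot y y - dot x y ^+ 2) by nra.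
by rewrite pmulr_rge0 // subr_ge0.
Qed.

Lemma vnormE n (x : 'cV[R]_n) : vnorm x = Num.sqrt (dot x x).
Proof. by congr Num.sqrt; apply: eq_bigr => i _; rewrite expr2. Qed.

Lemma vnorm_ge0 n (x : 'cV[R]_n) : 0 <= vnorm x.
Proof. exact: sqrtr_ge0. Qed.

Lemma vnorm_sq n (x : 'cV[R]_n) : vnorm x ^+ 2 = dot x x.
Proof. by rewrite vnormE sqr_sqrtr ?dot_ge0. Qed.

Lemma vnorm_eq0 n (x : 'cV[R]_n) : (vnorm x == 0) = (x == 0).
Proof. by rewrite -sqrf_eq0 vnorm_sq dot_eq0. Qed.

Lemma vnorm_gt0 n (x : 'cV[R]_n) : (0 < vnorm x) = (x != 0).
Proof. by rewrite lt_def vnorm_eq0 vnorm_ge0 andbT. Qed.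

Lemma vnorm0 n : vnorm (0 : 'cV[R]_n) = 0.
Proof. by apply/eqP; rewrite vnorm_eq0. Qed.

Lemma vnorm_le_dot m n (x : 'cV[R]_m) (y : 'cV[R]_n) c :
  0 <= c -> dot x x <= c ^+ 2 * dot y y -> vnorm x <= c * vnorm y.
Proof.
move=> c0 xy; rewrite -(ler_pXn2r (n := 2)) ?nnegrE ?mulr_ge0 ?vnorm_ge0 //.
by rewrite exprMn !vnorm_sq.
Qed.

Lemma dot_le_vnorm n (x y : 'cV[R]_n) : dot x y <= vnorm x * vnorm y.
Proof.
have xy0 : 0 <= vnorm x * vnorm y by rewrite mulr_ge0 ?vnorm_ge0.
have [/ltW/le_trans->//|xy_ge0] := ltP (dot x y) 0.
by rewrite -(ler_pXn2r (n := 2)) ?nnegrE // exprMn !vnorm_sq cauchy_schwarz.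
Qed.

Lemma ler_vnormD n (x y : 'cV[R]_n) : vnorm (x + y) <= vnorm x + vnorm y.
Proof.
rewrite -(ler_pXn2r (n := 2)) ?nnegrE ?addr_ge0 ?vnorm_ge0 //.
rewrite vnorm_sq dotDl !dotDr sqrrD !vnorm_sq (dotC y x).
have := dot_le_vnorm x y; lra.
Qed.

Lemma vnormZ n a (x : 'cV[R]_n) : vnorm (a *: x) = `|a| * vnorm x.
Proof. by rewrite !vnormE dotZl dotZr mulrA -expr2 sqrtrM ?sqr_ge0 // sqrtr_sqr. Qed.

Lemma vnormN n (x : 'cV[R]_n) : vnorm (- x) = vnorm x.
Proof. by rewrite -scaleN1r vnormZ normrN1 mul1r. Qed.

Lemma ler_vnormB n (x y : 'cV[R]_n) : vnorm (x - y) <= vnorm x + vnorm y.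
Proof. by rewrite -(vnormN y) ler_vnormD. Qed.

Lemma vnorm_normalize n (x : 'cV[R]_n) : x != 0 -> vnorm ((vnorm x)^-1 *: x) = 1.
Proof.
by rewrite -vnorm_gt0 => x0; rewrite vnormZ ger0_norm ?invr_ge0 ?ltW // mulVf ?gt_eqF.
Qed.

Lemma exists_unit_vector n : (0 < n)%N -> exists x : 'cV[R]_n, vnorm x = 1.
Proof.
move=> n0; exists ((vnorm (const_mx 1 : 'cV[R]_n))^-1 *: const_mx 1).
apply: vnorm_normalize; apply/eqP => /matrixP /(_ (Ordinal n0) 0) /eqP.
by rewrite !mxE oner_eq0.
Qed.

Lemma specnorm_has_ubound m n (A : 'M[R]_(m, n)) :
  has_ubound [set vnorm (A *m x) | x in [set x : 'cV[R]_n | vnorm x = 1]].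
Proof.
set F := \sum_(i < m) dot (row i A)^T (row i A)^T.
have F0 : 0 <= F by apply: sumr_ge0 => i _; apply: dot_ge0.
exists (Num.sqrt F) => _ [x /= x1 <-].
rewrite -[leRHS]mulr1 -x1; apply: vnorm_le_dot; first exact: sqrtr_ge0.
have -> : dot (A *m x) (A *m x) = \sum_(i < m) dot (row i A)^T x ^+ 2.
  apply: eq_bigr => i _; rewrite -expr2; congr (_ ^+ 2).
  by rewrite mxE; apply: eq_bigr => j _; rewrite !mxE.
by rewrite sqr_sqrtr // mulr_suml; apply: ler_sum => i _; apply: cauchy_schwarz.
Qed.

Lemma ler_specnorm m n (A : 'M[R]_(m, n)) x : vnorm (A *m x) <= specnorm A * vnorm x.
Proof.
have [->|x0] := eqVneq x 0; first by rewrite mulmx0 !vnorm0 mulr0.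
have nx_gt0 : 0 < vnorm x by rewrite vnorm_gt0.
have -> : A *m x = vnorm x *: (A *m ((vnorm x)^-1 *: x)).
  by rewrite -scalemxAr scalerA divff ?gt_eqF // scale1r.
rewrite vnormZ ger0_norm ?vnorm_ge0 // mulrC ler_pM2r //.
apply: (ub_le_sup (specnorm_has_ubound A)).
by exists ((vnorm x)^-1 *: x) => //=; rewrite vnorm_normalize.
Qed.

Lemma specnorm_le m n (A : 'M[R]_(m, n)) c :
  (0 < n)%N -> (forall x, vnorm (A *m x) <= c * vnorm x) -> specnorm A <= c.
Proof.
move=> n0 Ac; have [u u1] := exists_unit_vector n0.
apply: ge_sup; first by exists (vnorm (A *m u)), u.
by move=> _ [x /= x1 <-]; have := Ac x; rewrite x1 mulr1.
Qed.

Lemma specnorm_ge0 m n (A : 'M[R]_(m, n)) : (0 < n)%N -> 0 <= specnorm A.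
Proof.
move=> n0; have [u u1] := exists_unit_vector n0.
by have := ler_specnorm A u; rewrite u1 mulr1; apply: le_trans; apply: vnorm_ge0.
Qed.

Lemma vnorm_trmx_le m n (A : 'M[R]_(m, n)) c :
  0 <= c -> (forall x, vnorm (A *m x) <= c * vnorm x) ->
  forall y, vnorm (A^T *m y) <= c * vnorm y.
Proof.
move=> c0 Ac y; have [->|] := eqVneq (A^T *m y) 0.
  by rewrite vnorm0 mulr_ge0 ?vnorm_ge0.
rewrite -vnorm_gt0 => Ay_gt0; rewrite -(ler_pM2l Ay_gt0) -expr2 vnorm_sq.
rewrite -dot_mulmx; apply: le_trans (dot_le_vnorm _ _) _.
by rewrite mulrA ler_wpM2r ?vnorm_ge0 // mulrC Ac.
Qed.

Lemma vnorm_orth_mulmx m n (U : 'M[R]_(m, n)) x :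
  U^T *m U = 1%:M -> vnorm (U *m x) = vnorm x.
Proof. by move=> hU; rewrite !vnormE dot_mulmx mulmxA hU mul1mx. Qed.

Lemma vnorm_orth_trmx_le m n (U : 'M[R]_(m, n)) y :
  U^T *m U = 1%:M -> vnorm (U^T *m y) <= vnorm y.
Proof.
by move=> hU; rewrite -[leRHS]mul1r; apply: vnorm_trmx_le => // x; rewrite mul1r vnorm_orth_mulmx.
Qed.

End EuclideanNorm.

Section DiagonalMatrices.
Variable R : realType.
Implicit Types (n : nat) (c : R) (f g : nat -> R).

Lemma diag_ofM n f g : diag_of n f *m diag_of n g = diag_of n (fun i => f i * g i).
Proof. by rewrite /diag_of mulmx_diag; congr diag_mx; apply/rowP => i; rewrite !mxE. Qed.

Lemma diag_ofT n f : (diag_of n f)^T = diag_of n f.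
Proof. exact: tr_diag_mx. Qed.

Lemma eq_diag_of n f g : (forall i, (i < n)%N -> f i = g i) -> diag_of n f = diag_of n g.
Proof. by move=> fg; congr diag_mx; apply/rowP => i; rewrite !mxE fg. Qed.

Lemma diag_of1 n : diag_of n (fun=> 1) = 1%:M :> 'M[R]_n.
Proof. by rewrite -diag_const_mx; congr diag_mx; apply/rowP => i; rewrite !mxE. Qed.

Lemma diag_ofD n f g : diag_of n f + diag_of n g = diag_of n (fun i => f i + g i).
Proof. by apply/matrixP => i j; rewrite !mxE -mulrnDl. Qed.

Lemma diag_of_mulmx_entry n f (w : 'cV[R]_n) i : (diag_of n f *m w) i 0 = f i * w i 0.
Proof. by rewrite mul_diag_mx !mxE. Qed.

Lemma pid_mx_diag_of n r : pid_mx r = diag_of n (fun i => (i < r)%N%:R) :> 'M[R]_n.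
Proof. by apply/matrixP => i j; rewrite !mxE; case: ltnP; rewrite ?andbT ?andbF ?mul0rn. Qed.

Lemma vnorm_diag_of_le n f g c (w : 'cV[R]_n) :
  0 <= c -> (forall i : 'I_n, w i 0 != 0 -> `|f i| <= c * `|g i|) ->
  vnorm (diag_of n f *m w) <= c * vnorm (diag_of n g *m w).
Proof.
move=> c0 fg; apply: vnorm_le_dot => //; rewrite mulr_sumr; apply: ler_sum => i _.
rewrite !diag_of_mulmx_entry.
have [->|/fg fgi] := eqVneq (w i 0) 0; first by rewrite !mulr0.
have fg2 : f i * f i <= c ^+ 2 * (g i * g i).
  rewrite -[f i * f i]expr2 -[g i * g i]expr2 -(real_normK (num_real (f i))).
  by rewrite -(real_normK (num_real (g i))) -exprMn ler_sqr ?nnegrE ?mulr_ge0.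
have := ler_wpM2r (sqr_ge0 (w i 0)) fg2; rewrite !expr2; lra.
Qed.

End DiagonalMatrices.

Section MaskedProjectors.
Variable R : realType.

Lemma mulmx_trmx_orthK q n k (U : 'M[R]_(n, k)) (X : 'M[R]_(q, k)) :
  U^T *m U = 1%:M -> X *m U^T *m U = X.
Proof. by move=> hU; rewrite -mulmxA hU mulmx1. Qed.

Definition mask_proj (p : pred nat) n k (U : 'M[R]_(n, k)) : 'M[R]_n :=
  U *m diag_of k (fun i => (p i)%:R) *m U^T.

Lemma trmx_mask_proj p n k (U : 'M[R]_(n, k)) : (mask_proj p U)^T = mask_proj p U.
Proof. by rewrite /mask_proj !trmx_mul trmxK diag_ofT mulmxA. Qed.

Lemma mask_proj_predC p n (U : 'M[R]_n) :
  U^T *m U = 1%:M -> mask_proj p U + mask_proj (predC p) U = 1%:M.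
Proof.
move=> hU; rewrite /mask_proj -mulmxDl -mulmxDr diag_ofD.
have -> : diag_of n (fun i => (p i)%:R + (predC p i)%:R) = 1%:M :> 'M[R]_n.
  by rewrite -diag_of1; apply: eq_diag_of => i _ /=; case: (p i); rewrite ?addr0 ?add0r.
by rewrite mulmx1 mulmx1C.
Qed.

Lemma mask_projK p n k (U : 'M[R]_(n, k)) :
  U^T *m U = 1%:M -> mask_proj p U *m mask_proj p U = mask_proj p U.
Proof.
move=> hU; rewrite /mask_proj !mulmxA mulmx_trmx_orthK // -(mulmxA U) diag_ofM.
by congr (U *m _ *m _); apply: eq_diag_of => i _; rewrite -natrM mulnb andbb.
Qed.

Lemma vnorm_mask_proj_le p n k (U : 'M[R]_(n, k)) y :
  U^T *m U = 1%:M -> vnorm (mask_proj p U *m y) <= vnorm y.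
Proof.
move=> hU; rewrite /mask_proj -!mulmxA vnorm_orth_mulmx //.
apply: le_trans (vnorm_orth_trmx_le _ hU).
rewrite -{2}(mul1mx (U^T *m y)) -diag_of1 -[leRHS]mul1r.
by apply: vnorm_diag_of_le => // i _; rewrite mul1r normr1; case: (p i); rewrite ?normr1 ?normr0.
Qed.

End MaskedProjectors.

Notation head_proj r := (mask_proj (fun i => (i < r)%N)).
Notation tail_proj r := (mask_proj (predC (fun i => (i < r)%N))).

Lemma lead_projE (R : realType) n k r (U : 'M[R]_(n, k)) : lead_proj r U = head_proj r U.
Proof.
apply/matrixP => a b; rewrite /lead_proj summxE !mxE big_mkcond /=.
apply: eq_bigr => j _; rewrite mul_mx_diag !mxE big_ord1 !mxE.
by case: ifP; rewrite ?mulr1 ?mulr0 ?mul0r.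
Qed.

Section OrthogonalDecomposition.
Variables (R : realType) (n m k : nat) (U : 'M[R]_(n, k)) (V : 'M[R]_(m, k)).
Variable s : nat -> R.
Hypotheses (hU : U^T *m U = 1%:M) (hV : V^T *m V = 1%:M).
Implicit Types (p : pred nat) (a c e : R).
Local Notation A := (U *m diag_of k s *m V^T).

Lemma vnorm_decomp_mulmx x : vnorm (A *m x) = vnorm (diag_of k s *m (V^T *m x)).
Proof. by rewrite -!mulmxA vnorm_orth_mulmx. Qed.

Lemma decomp_mask_proj p : A *m mask_proj p V = mask_proj p U *m A.
Proof.
rewrite /mask_proj !mulmxA !mulmx_trmx_orthK // -!(mulmxA U) !diag_ofM.
by congr (U *m (_ *m _)); apply: eq_diag_of => i _; rewrite mulrC.
Qed.

Lemma vnorm_decomp_mask_le p c z :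
  0 <= c -> (forall i, (i < k)%N -> p i -> `|s i| <= c) ->
  vnorm (A *m (mask_proj p V *m z)) <= c * vnorm (mask_proj p V *m z).
Proof.
move=> c0 sc; rewrite vnorm_decomp_mulmx /mask_proj -!mulmxA (mulmxA V^T) hV mul1mx.
rewrite (vnorm_orth_mulmx _ hV) mulmxA diag_ofM; apply: vnorm_diag_of_le => // i _.
case: (boolP (p i)) => pi /=; rewrite ?mulr1n ?mulr0n ?normr1 ?normr0 ?mulr1 ?mulr0 ?normr0 //.
exact: sc.
Qed.

Lemma vnorm_mask_proj_mulmx_le p (C : 'M[R]_(n, m)) e w :
  (forall x, vnorm ((A - C) *m x) <= e * vnorm x) ->
  vnorm (mask_proj p U *m (C *m w)) <= vnorm (A *m (mask_proj p V *m w)) + e * vnorm w.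
Proof.
move=> hAC; have -> : C *m w = A *m w - (A - C) *m w by rewrite mulmxBl opprB addrC subrK.
have comm : A *m (mask_proj p V *m w) = mask_proj p U *m (A *m w).
  by rewrite (mulmxA A) decomp_mask_proj -(mulmxA (mask_proj p U)).
rewrite mulmxBr comm; apply: le_trans (ler_vnormB _ _) _.
by rewrite lerD2l (le_trans (vnorm_mask_proj_le _ _ hU)).
Qed.

Lemma decomp_pinv p a y :
  0 < a -> (forall i, (i < k)%N -> p i -> a <= s i) ->
  exists z, [/\ A *m z = mask_proj p U *m y, mask_proj p V *m z = z
              & vnorm z <= a^-1 * vnorm y].
Proof.
move=> a0 sa; set s_inv := fun i => if p i then (s i)^-1 else 0.
exists (V *m diag_of k s_inv *m U^T *m y); split.
- rewrite /mask_proj !mulmxA mulmx_trmx_orthK // -(mulmxA U) diag_ofM.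
  congr (U *m _ *m _ *m _); apply: eq_diag_of => i ik; rewrite /s_inv.
  by case: ifP => pi; rewrite ?mulr0 // mulfV // gt_eqF // (lt_le_trans a0) ?sa.
- rewrite /mask_proj !mulmxA mulmx_trmx_orthK // -(mulmxA V) diag_ofM.
  congr (V *m _ *m _ *m _); apply: eq_diag_of => i _.
  by rewrite /s_inv; case: ifP; rewrite ?mul1r ?mul0r.
- rewrite -!mulmxA (vnorm_orth_mulmx _ hV).
  apply: le_trans (_ : _ <= a^-1 * vnorm (U^T *m y)) _; last first.
    by apply: ler_wpM2l; [rewrite invr_ge0 ltW | exact: vnorm_orth_trmx_le].
  rewrite -{2}(mul1mx (U^T *m y)) -diag_of1; apply: vnorm_diag_of_le; first by rewrite invr_ge0 ltW.
  move=> i _; rewrite normr1 mulr1 /s_inv; case: ifP => pi; last by rewrite normr0 invr_ge0 ltW.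
  have si_gt0 := lt_le_trans a0 (sa i (ltn_ord i) pi).
  by rewrite ger0_norm ?invr_ge0 ?(ltW si_gt0) // lef_pV2 ?posrE //; apply: sa.
Qed.

End OrthogonalDecomposition.

Lemma trmx_decomp (R : realType) n m k (U : 'M[R]_(n, k)) (V : 'M[R]_(m, k)) s :
  (U *m diag_of k s *m V^T)^T = V *m diag_of k s *m U^T.
Proof. by rewrite !trmx_mul trmxK diag_ofT mulmxA. Qed.

Lemma vnorm_decompB_trmx_le (R : realType) n m k (U1 U2 : 'M[R]_(n, k))
    (V1 V2 : 'M[R]_(m, k)) (s1 s2 : nat -> R) e :
  0 <= e ->
  (forall x, vnorm ((U1 *m diag_of k s1 *m V1^T - U2 *m diag_of k s2 *m V2^T) *m x)
     <= e * vnorm x) ->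
  forall y, vnorm ((V1 *m diag_of k s1 *m U1^T - V2 *m diag_of k s2 *m U2^T) *m y)
     <= e * vnorm y.
Proof.
move=> e_ge0 h y; rewrite -(trmx_decomp U1) -(trmx_decomp U2) -linearB.
exact: vnorm_trmx_le h y.
Qed.

Section SingularValueDecomposition.
Variables (R : realType) (n m : nat) (A : 'M[R]_(n, m)).
Variables (U : 'M[R]_n) (s : nat -> R) (V : 'M[R]_(m, n)).
Hypothesis svdA : is_svd A U s V.

Lemma svd_head_ge r i : (r <= n)%N -> (i < r)%N -> s r.-1 <= s i.
Proof. by case: svdA => _ _ _ s_mono _ rn ir; apply: s_mono; lia. Qed.

Lemma svd_tail_le r i : (i < n)%N -> ~~ (i < r)%N -> `|s i| <= s r.
Proof.
case: svdA => _ _ s0 s_mono _ i_n; rewrite -leqNgt => ri.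
by rewrite ger0_norm ?s0 //; apply: s_mono.
Qed.

Lemma svd_mask_proj p : A *m mask_proj p V = mask_proj p U *m A.
Proof. by case: svdA => hU hV _ _ ->; apply: decomp_mask_proj. Qed.

Lemma svd_mulmx_tail_proj_le r w : (r < n)%N ->
  vnorm (A *m (tail_proj r V *m w)) <= s r * vnorm (tail_proj r V *m w).
Proof.
move=> rn; have [hU hV s0 _ ->] := svdA.
by apply: vnorm_decomp_mask_le => // [|i]; [apply: s0 | apply: svd_tail_le].
Qed.

Lemma svd_tail_proj_mulmx_le r x : (r < n)%N ->
  vnorm (tail_proj r U *m (A *m x)) <= s r * vnorm x.
Proof.
move=> rn; have [_ hV s0 _ _] := svdA.
rewrite mulmxA -svd_mask_proj -mulmxA; apply: le_trans (svd_mulmx_tail_proj_le _ rn) _.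
by apply: (ler_wpM2l (s0 _ rn)); apply: vnorm_mask_proj_le.
Qed.

Lemma svd_head_vnorm_ge k (c : 'cV[R]_n) :
  (k < n)%N -> (forall i : 'I_n, (k < i)%N -> c i 0 = 0) ->
  s k * vnorm c <= vnorm (A *m (V *m c)).
Proof.
move=> kn c_head; have [hU hV s0 s_mono ->] := svdA.
rewrite vnorm_decomp_mulmx // (mulmxA V^T) hV mul1mx.
rewrite -(ger0_norm (s0 _ kn)) -vnormZ -[leRHS]mul1r.
have -> : s k *: c = diag_of n (fun=> s k) *m c.
  by apply/matrixP => i j; rewrite (ord1 j) diag_of_mulmx_entry !mxE.
apply: vnorm_diag_of_le => // i ci; rewrite mul1r !ger0_norm ?s0 //.
by apply: s_mono => //; rewrite leqNgt; apply: contraNN ci => /c_head/eqP.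
Qed.

Lemma svd_tail_vnorm_le k (x : 'cV[R]_m) :
  (k < n)%N -> (forall i : 'I_n, (i < k)%N -> (V^T *m x) i 0 = 0) ->
  vnorm (A *m x) <= s k * vnorm x.
Proof.
move=> kn x_tail; have [hU hV s0 s_mono ->] := svdA.
rewrite vnorm_decomp_mulmx //.
apply: le_trans (_ : _ <= s k * vnorm (diag_of n (fun=> 1) *m (V^T *m x))) _.
  apply: vnorm_diag_of_le => [|i xi]; first exact: s0.
  rewrite normr1 mulr1 ger0_norm ?s0 //; apply: s_mono => //.
  by rewrite leqNgt; apply: contraNN xi => /x_tail/eqP.
by rewrite diag_of1 mul1mx; apply: (ler_wpM2l (s0 _ kn)); apply: vnorm_orth_trmx_le.
Qed.

End SingularValueDecomposition.

Lemma exists_kernel_vector (R : realType) n k (C : 'M[R]_n) :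
  (k < n)%N -> (\rank C <= k)%N ->
  exists c : 'cV[R]_n, [/\ c != 0, forall i : 'I_n, (k < i)%N -> c i 0 = 0 & C *m c = 0].
Proof.
move=> kn rC; pose N := kermx (C *m (pid_mx k.+1 : 'M[R]_n))^T.
have rN : (n - k <= \rank N)%N.
  rewrite mxrank_ker mxrank_tr leq_sub2l //.
  exact: leq_trans (mxrankM_maxl _ _) rC.
have : N *m (pid_mx k.+1 : 'M[R]_n) != 0.
  apply/negP => /eqP /sub_kermxP /mxrankS; rewrite mxrank_ker rank_pid_mx //.
  by move=> /(leq_trans rN); rewrite leq_sub2lE ?ltnn // ltnW.
case/eqP/row_matrixP/boolp.existsNP => i; rewrite row0 row_mul => Ni.
have row_in_N : (row i N <= N)%MS by apply: row_sub.
exists ((row i N *m pid_mx k.+1)^T); split.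
- by rewrite -trmx0 (inj_eq trmx_inj); apply/eqP.
- move=> j kj; rewrite trmx_mul tr_pid_mx pid_mx_diag_of diag_of_mulmx_entry.
  by rewrite ltnNge kj mul0r.
- move/sub_kermxP: row_in_N => /(congr1 trmx); rewrite trmx_mul trmxK trmx0 => <-.
  by rewrite trmx_mul tr_pid_mx mulmxA.
Qed.

(* Courant-Fischer: by a dimension count some nonzero x in the span of the first k+1 right
   singular vectors of A is orthogonal to the first k right singular vectors of B. *)
Theorem weyl_singular_value (R : realType) n m (A B : 'M[R]_(n, m)) UA sA VA UB sB VB e k :
  is_svd A UA sA VA -> is_svd B UB sB VB ->
  (forall x, vnorm ((A - B) *m x) <= e * vnorm x) -> (k < n)%N -> sA k <= sB k + e.
Proof.
move=> svdA svdB hAB kn.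
have [[_ hVA _ _ _] [_ hVB _ _ _]] := (svdA, svdB).
have rank_le : (\rank ((pid_mx k : 'M[R]_n) *m VB^T *m VA) <= k)%N.
  apply: leq_trans (mxrankM_maxl _ _) _; apply: leq_trans (mxrankM_maxl _ _) _.
  by rewrite rank_pid_mx // ltnW.
have [c [c0 c_head c_ker]] := exists_kernel_vector kn rank_le.
set x := VA *m c.
have x_tail (i : 'I_n) : (i < k)%N -> (VB^T *m x) i 0 = 0.
  move=> ik; move/matrixP: c_ker => /(_ i 0).
  by rewrite pid_mx_diag_of -!mulmxA diag_of_mulmx_entry ik /= mulr1n mul1r => ->; rewrite mxE.
have nx : vnorm x = vnorm c by rewrite vnorm_orth_mulmx.
have hx : vnorm (A *m x) <= vnorm (B *m x) + e * vnorm x.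
  have -> : A *m x = B *m x + (A - B) *m x by rewrite mulmxBl addrC subrK.
  by apply: le_trans (ler_vnormD _ _) _; rewrite lerD2l.
have := svd_head_vnorm_ge svdA kn c_head; have := svd_tail_vnorm_le svdB kn x_tail.
rewrite -/x nx in hx * => hB hA; rewrite -(ler_pM2r (_ : 0 < vnorm c)) ?vnorm_gt0 //.
by rewrite mulrDl; apply: le_trans hA (le_trans hx _); rewrite lerD2r.
Qed.

Lemma coupled_le (R : realType) (a b e x y : R) :
  0 <= b -> b < a -> x <= (b * y + e) / a -> y <= (b * x + e) / a -> x <= e / (a - b).
Proof.
move=> b0 ba; have a0 : 0 < a by apply: le_lt_trans ba.
rewrite !ler_pdivlMr ?subr_gt0 // => hx hy.
by have [xy|yx] := leP x y; nra.
Qed.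

Section WedinStep.
Variables (R : realType) (n m k r : nat) (a b e : R).
Variables (UA UB : 'M[R]_(n, k)) (VA VB : 'M[R]_(m, k)) (sA sB : nat -> R).
Hypotheses (hUA : UA^T *m UA = 1%:M) (hVA : VA^T *m VA = 1%:M).
Hypotheses (hUB : UB^T *m UB = 1%:M) (hVB : VB^T *m VB = 1%:M).
Hypotheses (n_gt0 : (0 < n)%N) (m_gt0 : (0 < m)%N).
Hypotheses (a_gt0 : 0 < a) (b_ge0 : 0 <= b) (e_ge0 : 0 <= e).
Hypothesis sA_head : forall i, (i < k)%N -> (i < r)%N -> a <= sA i.
Hypothesis sB_tail : forall i, (i < k)%N -> ~~ (i < r)%N -> `|sB i| <= b.
Local Notation A := (UA *m diag_of k sA *m VA^T).
Local Notation B := (UB *m diag_of k sB *m VB^T).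
Hypothesis hBA : forall x, vnorm ((B - A) *m x) <= e * vnorm x.

(* Write P_A y = A z with |z| <= |y| / a; then Q_B P_A y = B Q_{V_B} P_{V_A} z - Q_B (B - A) z. *)
Lemma wedin_step : specnorm (tail_proj r UB *m head_proj r UA)
  <= (b * specnorm (tail_proj r VB *m head_proj r VA) + e) / a.
Proof.
set t := specnorm (tail_proj r VB *m head_proj r VA).
have t_ge0 : 0 <= t by apply: specnorm_ge0.
apply: specnorm_le => // y.
have [z [Az Pz z_le]] := decomp_pinv hUA hVA y a_gt0 sA_head.
rewrite -mulmxA -Az; apply: le_trans (vnorm_mask_proj_mulmx_le hUB hVB _ _ hBA) _.
apply: le_trans (_ : (b * t + e) * vnorm z <= _); last first.
  by rewrite -mulrA; apply: ler_wpM2l; rewrite ?addr_ge0 ?mulr_ge0.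
rewrite mulrDl lerD2r; apply: le_trans (vnorm_decomp_mask_le hUB hVB _ b_ge0 sB_tail) _.
by rewrite -{1}Pz mulmxA -mulrA; apply: ler_wpM2l => //; apply: ler_specnorm.
Qed.

End WedinStep.

Section WedinSinTheta.
Variables (R : realType) (n m k r : nat) (a b e : R).
Variables (UA UB : 'M[R]_(n, k)) (VA VB : 'M[R]_(m, k)) (sA sB : nat -> R).
Hypotheses (hUA : UA^T *m UA = 1%:M) (hVA : VA^T *m VA = 1%:M).
Hypotheses (hUB : UB^T *m UB = 1%:M) (hVB : VB^T *m VB = 1%:M).
Hypotheses (n_gt0 : (0 < n)%N) (m_gt0 : (0 < m)%N).
Hypotheses (b_ge0 : 0 <= b) (b_lt_a : b < a) (e_ge0 : 0 <= e).
Hypothesis sA_head : forall i, (i < k)%N -> (i < r)%N -> a <= sA i.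
Hypothesis sB_tail : forall i, (i < k)%N -> ~~ (i < r)%N -> `|sB i| <= b.
Hypothesis hBA : forall x,
  vnorm ((UB *m diag_of k sB *m VB^T - UA *m diag_of k sA *m VA^T) *m x) <= e * vnorm x.

Theorem wedin_sin_theta y :
  vnorm (tail_proj r UB *m (head_proj r UA *m y)) <= e / (a - b) * vnorm y.
Proof.
have a_gt0 : 0 < a := le_lt_trans b_ge0 b_lt_a.
have left := wedin_step hUA hVA hUB hVB n_gt0 m_gt0 a_gt0 b_ge0 e_ge0 sA_head sB_tail hBA.
have right := wedin_step hVA hUA hVB hUB m_gt0 n_gt0 a_gt0 b_ge0 e_ge0 sA_head sB_tail
  (vnorm_decompB_trmx_le e_ge0 hBA).
rewrite mulmxA; apply: le_trans (ler_specnorm _ _) _.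
by apply: ler_wpM2r; [apply: vnorm_ge0 | apply: coupled_le left right].
Qed.

End WedinSinTheta.

Corollary svd_sin_theta (R : realType) n m (A B : 'M[R]_(n, m)) UA sA VA UB sB VB r (e : R) :
  is_svd A UA sA VA -> is_svd B UB sB VB -> (0 < r)%N -> (r < n)%N -> (n <= m)%N ->
  0 <= e -> sB r < sA r.-1 -> (forall x, vnorm ((B - A) *m x) <= e * vnorm x) ->
  (forall y, vnorm (tail_proj r UB *m (head_proj r UA *m y))
     <= e / (sA r.-1 - sB r) * vnorm y) /\
  (forall z, vnorm (tail_proj r VB *m (head_proj r VA *m z))
     <= e / (sA r.-1 - sB r) * vnorm z).
Proof.
move=> svdA svdB r_gt0 rn nm e_ge0 gap hBA.
have n_gt0 : (0 < n)%N by apply: leq_ltn_trans rn.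
have m_gt0 : (0 < m)%N by apply: leq_trans nm.
have sB_ge0 : 0 <= sB r by case: svdB => _ _ -> .
have sA_head i : (i < n)%N -> (i < r)%N -> sA r.-1 <= sA i.
  by move=> _; apply: svd_head_ge svdA _ _ (ltnW rn).
have sB_tail i : (i < n)%N -> ~~ (i < r)%N -> `|sB i| <= sB r.
  exact: (svd_tail_le svdB).
case: svdA svdB hBA => hUA hVA _ _ -> [hUB hVB _ _ ->] hBA.
split.
  exact: (wedin_sin_theta hUA hVA hUB hVB n_gt0 m_gt0 sB_ge0 gap e_ge0 sA_head sB_tail hBA).
exact: (wedin_sin_theta hVA hUA hVB hUB m_gt0 n_gt0 sB_ge0 gap e_ge0 sA_head sB_tail
  (vnorm_decompB_trmx_le e_ge0 hBA)).
Qed.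

Lemma mulmx_proj_diff (R : realType) n m (P Ps Q Qs : 'M[R]_n) (A : 'M[R]_(n, m)) :
  P + Q = 1%:M -> Ps + Qs = 1%:M -> (P - Ps) *m A = P *m (Qs *m A) - Q *m (Ps *m A).
Proof.
move=> PQ PsQs; have -> : Q = 1%:M - P by rewrite -PQ addrAC subrr add0r.
have -> : Qs = 1%:M - Ps by rewrite -PsQs addrAC subrr add0r.
rewrite !mulmxA -mulmxBl; congr (_ *m A).
by rewrite mulmxBr mulmx1 mulmxBl mul1mx opprB addrA subrK.
Qed.

Lemma svd_sym_tail_proj_le (R : realType) n m (A : 'M[R]_(n, m)) U s V r (P : 'M[R]_n) t x :
  is_svd A U s V -> (r < n)%N -> P^T = P -> 0 <= t ->
  (forall y, vnorm (tail_proj r U *m (P *m y)) <= t * vnorm y) ->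
  vnorm (P *m (tail_proj r U *m (A *m x))) <= t * (s r * vnorm x).
Proof.
move=> svdA rn PT t_ge0 QP.
have QP' y : vnorm (tail_proj r U *m P *m y) <= t * vnorm y by rewrite -mulmxA; apply: QP.
have [hU _ _ _ _] := svdA.
rewrite -(mask_projK _ hU) -(mulmxA _ _ (A *m x)) (mulmxA P).
rewrite -[P *m _]trmxK trmx_mul PT trmx_mask_proj.
apply: le_trans (vnorm_trmx_le t_ge0 QP' _) _.
by apply: (ler_wpM2l t_ge0); apply: (svd_tail_proj_mulmx_le svdA).
Qed.

Lemma svd_tail_proj_head_proj_le (R : realType) n m (A B : 'M[R]_(n, m))
    UA sA VA UB sB VB r (t e : R) x :
  is_svd A UA sA VA -> is_svd B UB sB VB -> (r < n)%N -> 0 <= e ->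
  (forall x, vnorm ((B - A) *m x) <= e * vnorm x) ->
  (forall z, vnorm (tail_proj r VB *m (head_proj r VA *m z)) <= t * vnorm z) ->
  vnorm (tail_proj r UB *m (head_proj r UA *m (A *m x))) <= (sB r * t + e) * vnorm x.
Proof.
move=> svdA svdB rn e_ge0 hBA QP; have [hUB hVB sB0 _ defB] := svdB.
rewrite (mulmxA (head_proj r UA)) -(svd_mask_proj svdA) -mulmxA.
rewrite defB in hBA; apply: le_trans (vnorm_mask_proj_mulmx_le hUB hVB _ _ hBA) _.
rewrite -defB mulrDl -mulrA; apply: lerD.
  apply: le_trans (svd_mulmx_tail_proj_le svdB _ rn) _.
  by apply: (ler_wpM2l (sB0 _ rn)); apply: QP.
by apply: (ler_wpM2l e_ge0); apply: vnorm_mask_proj_le; case: svdA.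
Qed.

Lemma gap_ratio_le (R : realType) (e g d : R) :
  0 <= e -> 2 * e < g -> g - e <= d -> e / d <= 2 * e / g.
Proof.
move=> e_ge0 eg gd; have g_gt0 : 0 < g by lra.
have d_gt0 : 0 < d by lra.
rewrite ler_pdivrMr // mulrAC ler_pdivlMr //.
have h1 : 0 <= e * (d - (g - e)) by rewrite mulr_ge0 // subr_ge0.
have h2 : 0 <= e * (g - 2 * e) by rewrite mulr_ge0 // subr_ge0 ltW.
nra.
Qed.

Lemma sin_theta_terms_le (R : realType) (a b a' b' e : R) :
  0 <= e -> 0 <= b -> 0 <= b' -> 2 * e < a - b -> a <= a' + e -> b' <= b + e ->
  e / (a' - b) * b + (b' * (e / (a - b')) + e) <= 4 * a * e / (a - b).
Proof.
move=> e_ge0 b_ge0 b'_ge0 gap aa' bb'.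
set t := 2 * e / (a - b).
have t1 : e / (a' - b) <= t by apply: gap_ratio_le => //; lra.
have t2 : e / (a - b') <= t by apply: gap_ratio_le => //; lra.
have t_le1 : t <= 1 by rewrite ler_pdivrMr; lra.
have tg : t * (a - b) = 2 * e by rewrite /t mulfVK //; lra.
have -> : 4 * a * e / (a - b) = 2 * a * t by rewrite /t; field; lra.
have := ler_wpM2r b_ge0 t1; have := ler_wpM2l b'_ge0 t2; have := ler_wpM2l e_ge0 t_le1.
nra.
Qed.

Unset Implicit Arguments.
(* Singular values are 0-indexed: sigma_i (paper, 1-based) = s (i-1).
   So sigma*_r = ss (r-1), sigma*_{r+1} = ss r. *)
Theorem lemma6 (R : realType) (n1 n2 r : nat)
  (Mstar E : 'M[R]_(n1, n2))
  (Us : 'M[R]_n1) (ss : nat -> R) (Vs : 'M[R]_(n2, n1))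
  (U : 'M[R]_n1) (s : nat -> R) (V : 'M[R]_(n2, n1)) :
  (n1 <= n2)%N -> (0 < r)%N -> (r < n1)%N ->
  is_svd Mstar Us ss Vs ->
  is_svd (Mstar + E) U s V ->
  ss r.-1 - ss r > 2 * specnorm E ->
  specnorm ((lead_proj r U - lead_proj r Us) *m Mstar)
    <= 4 * ss r.-1 * specnorm E / (ss r.-1 - ss r).
Proof.
move=> n12 r_gt0 rn svdS svdM gap.
set e := specnorm E in gap *.
have e_ge0 : 0 <= e by apply: specnorm_ge0; lia.
have hE x : vnorm ((Mstar + E - Mstar) *m x) <= e * vnorm x.
  by rewrite addrC addKr; apply: ler_specnorm.
have hNE x : vnorm ((Mstar - (Mstar + E)) *m x) <= e * vnorm x.
  by rewrite opprD addrA subrr add0r mulNmx vnormN; apply: ler_specnorm.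
have w1 := weyl_singular_value svdS svdM hNE (leq_ltn_trans (leq_pred r) rn).
have w2 := weyl_singular_value svdM svdS hE rn.
have [[hUs _ ss_ge0 _ _] [hU _ s_ge0 _ _]] := (svdS, svdM).
have [gap1 gap2] : ss r < s r.-1 /\ s r < ss r.-1 by split; lra.
have [sin1 _] := svd_sin_theta svdM svdS r_gt0 rn n12 e_ge0 gap1 hNE.
have [_ sin2] := svd_sin_theta svdS svdM r_gt0 rn n12 e_ge0 gap2 hE.
have t1_ge0 : 0 <= e / (s r.-1 - ss r) by rewrite divr_ge0 // subr_ge0 ltW.
rewrite !lead_projE; apply: specnorm_le => [|x]; first lia.
rewrite -mulmxA (mulmx_proj_diff _ (mask_proj_predC _ hU) (mask_proj_predC _ hUs)).
apply: le_trans (ler_vnormB _ _) _.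
apply: le_trans (lerD (svd_sym_tail_proj_le _ svdS rn (trmx_mask_proj _ _) t1_ge0 sin1)
  (svd_tail_proj_head_proj_le _ svdS svdM rn e_ge0 hE sin2)) _.
rewrite [_ * (ss r * _)]mulrA -mulrDl; apply: ler_wpM2r; first exact: vnorm_ge0.
by apply: sin_theta_terms_le; rewrite ?ss_ge0 ?s_ge0 //; lra.
Qed.
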